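(* (Root Capacity Magnification Theorem.) Let $K$ be a perfect field and let $K\subseteq L\subseteq M$ be finite extensions inside $\bar K$. Let $F/K$ be a finite Galois extension of degree $d$ such that $M'=MF$ is obtained by strong cluster magnification from $M/K$ through $F/K$ and $L'=LF$ is obtained by strong cluster magnification from $L/K$ through $F/K$. Then $\rho_K(M',L')=d\cdot\rho_K(M,L)$.
   Context: $\bar K$ is a fixed algebraic closure of $K$; $\tilde E$ denotes the Galois closure in $\bar K$ of a finite extension $E/K$. A finite extension $M/K$ is obtained by strong cluster magnification from a subextension $L/K$ through a finite Galois extension $F/K$ if $[L:K]>2$, $\tilde L\cap F=K$, and $LF=M$; $d=[F:K]$ is the magnification factor. For finite extensions $L/K$, $M/K$, writing $L=K(\alpha)$ with minimal polynomial $f$ of $\alpha$ over $K$, the root capacity $\rho_K(M,L)$ is the number of roots of $f$ lying in $M$ (independent of the choice of $\alpha$); equivalently $\rho_K(M,L)=a\cdot r_K(L)$, where $a$ is the number of distinct subfields of $M$ isomorphic to $L$ over $K$ and $r_K(L)$ is the number of roots of $f$ in $L$. *)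

From HB Require Import structures.
From mathcomp Require Import all_boot all_order all_algebra all_fingroup all_field.
Set Implicit Arguments. Unset Strict Implicit. Unset Printing Implicit Defensive.
Import GRing.Theory.
Local Open Scope ring_scope.

Definition perfect_field (K : fieldType) : Prop :=
  [pchar K] =i pred0 \/
  exists2 p : nat, p \in [pchar K] & forall x : K, exists y : K, y ^+ p = x.

Section Ambient.
Variables (K : fieldType) (Om : splittingFieldType K).

(* Galois (= normal, K being perfect) closure of E over K inside the ambient
   normal extension Om: the subfield generated by all K-conjugates of E. *)
Definition galClosure (E : {vspace Om}) : {aspace Om} :=
  << \sum_(s in galoisG {:Om} 1%VS) (s @: E) >>%AS.

Definition nroots_in (M : {vspace Om}) (p : {poly Om}) (n : nat) : Prop :=
  exists s : seq Om, [/\ uniq s, size s = n &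
                      forall y, (y \in s) = (y \in M) && root p y].

(* [root_capacity M L n] : rho_K(M, L) = n, i.e. for a primitive element
   alpha of L/K, the minimal polynomial of alpha over K has n roots in M.
   (This number is independent of the choice of alpha.) *)
Definition root_capacity (M L : {vspace Om}) (n : nat) : Prop :=
  exists alpha : Om, L = <<1%VS; alpha>>%VS /\ nroots_in M (minPoly 1%VS alpha) n.

Definition strong_cluster_magnification (E F M' : {vspace Om}) : Prop :=
  [/\ (2 < \dim E)%N, galois 1%VS F,
      (galClosure E :&: F)%VS = 1%VS & M' = (E * F)%VS].
End Ambient.

From HB Require Import structures.
From mathcomp Require Import all_boot all_order all_algebra all_fingroup all_field.
Set Implicit Arguments. Unset Strict Implicit. Unset Printing Implicit Defensive.
Import GRing.Theory.
Local Open Scope ring_scope.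

(* Since K is perfect, Om is Galois over K; write L = K(alpha), LF = K(gamma).
   An automorphism s sends gamma into MF iff it sends alpha into M: one way
   because F is normal, the other because s(L) lies in the Galois closure C of
   M, and C meets MF only in M, as comparing degrees with
   [EF:K][E :&: F:K] = [E:K][F:K] (F Galois) shows.  Counting this common set of
   automorphisms through the fibres of s |-> s alpha and s |-> s gamma gives
   |Gal(Om/L)| rho_K(M,L) = |Gal(Om/LF)| rho_K(MF,LF), and
   |Gal(Om/L)| = d |Gal(Om/LF)| because [LF:K] = d [L:K]. *)

Lemma map_poly_surj (R S : nzRingType) (f : {rmorphism R -> S}) :
  (forall y, exists x, f x = y) -> forall q : {poly S}, exists p, map_poly f p = q.
Proof.
move=> f_surj; elim/poly_ind => [|q c [p <-]]; first by exists 0; rewrite map_poly0.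
have [a <-] := f_surj c.
by exists (p * 'X + a%:P); rewrite rmorphD rmorphM /= map_polyX map_polyC.
Qed.

Lemma size_minPoly_comp_Xn (F0 : fieldType) (L : fieldExtType F0)
    (U : {vspace L}) (x : L) (g : {poly L}) n :
  (1 < n)%N -> minPoly U x = g \Po 'X^n -> (size g < size (minPoly U x))%N.
Proof.
move=> n_gt1 Dmin; have := size_comp_poly g 'X^n.
rewrite -Dmin size_polyXn size_minPoly /=.
have deg_gt0 : (0 < adjoin_degree U x)%N by [].
move=> Ddeg; rewrite Ddeg in deg_gt0 *; case: (size g) deg_gt0 => [|s] //=.
by rewrite muln_gt0 ltnS => /andP[s_gt0 _]; rewrite ltn_Pmulr.
Qed.

Lemma capv_trivialS (F0 : fieldType) (L : fieldExtType F0) (X Y F : {subfield L}) :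
  (X <= Y)%VS -> (Y :&: F)%VS = 1%VS -> (X :&: F)%VS = 1%VS.
Proof.
move=> sXY capYF; apply/eqP; rewrite eqEsubv sub1v andbT -capYF.
exact: capvS sXY (subvv F).
Qed.

Section PerfectField.
Variables (K : fieldType) (Om : splittingFieldType K).

Lemma perfect_separable_element (x : Om) :
  perfect_field K -> separable_element 1%VS x.
Proof.
case=> [K0 | [q qK frobK_surj]].
  by apply: pcharf0_separable => p; rewrite (pchar_lalg Om) K0.
apply/negPn/negP => /separablePn_pchar [p pOm [g /polyOver1P[g0 ->] Dmin]].
have pK : p \in [pchar K] by rewrite -(pchar_lalg Om).
have /eqP eq_qp : q == p by have := pcharf_eq pK q; rewrite qK.
rewrite {q qK}eq_qp in frobK_surj.
(* Taking p-th roots of the coefficients of g gives h over K with h(x)^p = g(x^p) = 0. *)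
have [h0 Dg0] := @map_poly_surj _ _ (pFrobenius_aut pK) frobK_surj g0.
pose h := map_poly (in_alg Om) h0.
have Dg : map_poly (in_alg Om) g0 = map_poly (pFrobenius_aut pOm) h.
  rewrite -Dg0 -!map_poly_comp; apply: eq_map_poly => c /=.
  by rewrite !pFrobenius_autE exprZn expr1n.
have hx : root h x.
  have : pFrobenius_aut pOm h.[x] = 0.
    by rewrite -horner_map /= -Dg pFrobenius_autE -hornerXn -horner_comp -Dmin minPolyxx.
  by move/eqP; rewrite fmorph_eq0.
have size_h : size h = size (map_poly (in_alg Om) g0).
  by rewrite Dg [RHS]size_map_inj_poly ?pFrobenius_aut0 //; exact: fmorph_inj.
have nz_h : h != 0.
  apply: contra_eqN size_h => /eqP ->; rewrite size_poly0 eq_sym size_poly_eq0.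
  by apply: contra_eqN Dmin => /eqP ->; rewrite comp_poly0 monic_neq0 ?monic_minPoly.
have h1 : h \is a polyOver 1%VS by apply/polyOver1P; exists h0.
have := dvdp_leq nz_h (minPoly_dvdp h1 hx); rewrite size_h leqNgt.
by rewrite (size_minPoly_comp_Xn _ Dmin) // prime_gt1 ?(pcharf_prime pOm).
Qed.

Lemma perfect_galois : perfect_field K -> galois 1%VS {:Om}.
Proof.
move=> perfK; rewrite /galois subvf normalFieldf andbT.
by apply/separableP => y _; apply: perfect_separable_element.
Qed.

End PerfectField.

Lemma card_uniform_fibers (T : finType) (U : eqType) (f : T -> U) (A : {set T}) k :
  (forall x, x \in A -> #|[set y in A | f y == f x]| = k) ->
  #|A| = (k * size (undup (map f (enum A))))%N.
Proof.
move=> fiberA; set u := undup _.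
have -> : #|A| = \sum_(v <- u) #|[set y in A | f y == v]|.
  transitivity (\sum_(v <- u) \sum_(y in A) (f y == v : nat)).
    rewrite exchange_big /= -sum1_card; apply: eq_bigr => y yA.
    have -> : \sum_(v <- u) (f y == v : nat) = count (pred1 (f y)) u.
      rewrite -sum1_count [RHS]big_mkcond /=; apply: eq_bigr => v _.
      by rewrite eq_sym; case: (_ == _).
    by rewrite count_uniq_mem ?undup_uniq // mem_undup map_f ?mem_enum.
  apply: eq_bigr => v _; rewrite -sum1dep_card big_mkcondr /=.
  by apply: eq_bigr => y _; case: (_ == _).
rewrite -sum1_size big_distrr /=; apply: eq_big_seq => v.
by rewrite mem_undup => /mapP [x]; rewrite mem_enum => xA ->; rewrite fiberA ?muln1.
Qed.

Section GaloisGroup.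
Variables (K : fieldType) (Om : splittingFieldType K).
Implicit Types (E F : {subfield Om}) (V : {vspace Om}) (s t : gal_of {:Om}) (x y : Om).

Lemma mem_gal1 s : s \in 'Gal({:Om} / 1%AS)%g.
Proof. by rewrite gal_kHom ?sub1v // k1AHom. Qed.

Lemma mem_gal_adjoin x s : (s \in 'Gal({:Om} / <<1; x>>%AS)%g) = (s x == x).
Proof.
apply/idP/eqP => [sG | sx]; first by apply: (fixed_gal (subvf _) sG); apply: memv_adjoin.
have : [set s] \subset 'Gal({:Om} / <<1; x>>%AS)%g.
  rewrite galois_connection ?subvf //; apply/FadjoinP; split; first exact: sub1v.
  by apply/fixedFieldP; [exact: memvf | move=> y /set1P ->].
by rewrite sub1set.
Qed.

Lemma mem_gal_adjoin_rcoset x s t :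
  (t \in ('Gal({:Om} / <<1; x>>%AS) :* s)%g) = (t x == s x).
Proof.
have sVK y : (s^-1)%g (s y) = y by rewrite -galM ?memvf // mulgV gal_id.
have sKV y : s ((s^-1)%g y) = y by rewrite -galM ?memvf // mulVg gal_id.
by rewrite mem_rcoset mem_gal_adjoin galM ?memvf // -{2}[x]sVK (can_eq sKV).
Qed.

Lemma normalField_aimg_sub F s : normalField 1 F -> (s @: F <= F)%VS.
Proof.
move=> /normalFieldP nF; apply/subvP => _ /memv_imgP [y yF ->].
have [r /allP rF Dm] := nF y yF; apply: rF.
by rewrite -root_prod_XsubC -Dm root_minPoly_gal ?subvf ?memvf ?mem_gal1.
Qed.

Lemma aimg_adjoin1_sub E s x : (s @: <<1; x>> <= E)%VS = (s x \in E).
Proof.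
rewrite aimg_adjoin aimg1; apply/FadjoinP/idP => [[] // | sxE].
by split=> //; apply: sub1v.
Qed.

Lemma mem_galClosure V s y : y \in V -> s y \in galClosure V.
Proof.
move=> yV; apply: (subvP (sub_agenv _)).
by apply: (subvP (sumv_sup s _ (subvv _))); rewrite ?mem_gal1 ?memv_img.
Qed.

Lemma aimg_sub_galClosure V s : (s @: V <= galClosure V)%VS.
Proof. by apply/subvP => _ /memv_imgP [y yV ->]; apply: mem_galClosure. Qed.

Lemma sub_galClosure V : (V <= galClosure V)%VS.
Proof. by apply/subvP => y yV; have := mem_galClosure 1%g yV; rewrite gal_id. Qed.

Lemma gal_prodv E F :
  'Gal({:Om} / (E * F)%AS)%g = ('Gal({:Om} / E) :&: 'Gal({:Om} / F))%g.
Proof.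
apply/eqP; rewrite eqEsubset subsetI !galS ?field_subvMr ?field_subvMl //=.
rewrite galois_connection ?subvf //.
by apply: prodv_sub; rewrite -galois_connection ?subvf ?subsetIl ?subsetIr.
Qed.

Definition conjugates_in V x : seq Om :=
  undup [seq s x | s <- enum [set s : gal_of {:Om} | s x \in V]].

Lemma mem_conjugates_in V x y :
  (y \in conjugates_in V x) = (y \in V) && root (minPoly 1 x) y.
Proof.
rewrite mem_undup; apply/mapP/andP => [[s] | [yV rxy]].
  by rewrite mem_enum inE => sxV ->; rewrite root_minPoly_gal ?subvf ?memvf ?mem_gal1.
have [s _ sx] := normalField_root_minPoly (subvf 1) (normalFieldf 1) (memvf x) rxy.
by exists s; rewrite // mem_enum inE sx.
Qed.

Lemma nroots_in_conjugates V x : nroots_in V (minPoly 1 x) (size (conjugates_in V x)).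
Proof. by exists (conjugates_in V x); rewrite undup_uniq; split=> // y; apply: mem_conjugates_in. Qed.

Lemma nroots_in_uniq V p m n : nroots_in V p m -> nroots_in V p n -> m = n.
Proof.
move=> [r [ur <- rP]] [s [us <- sP]]; apply: perm_size.
by apply: uniq_perm => // y; rewrite rP sP.
Qed.

Lemma card_gal_into V x :
  #|[set s : gal_of {:Om} | s x \in V]| =
  (#|'Gal({:Om} / <<1; x>>%AS)%g| * size (conjugates_in V x))%N.
Proof.
apply: card_uniform_fibers => s; rewrite inE => sxV.
rewrite -(card_rcoset _ s); apply: eq_card => t.
rewrite !inE mem_gal_adjoin_rcoset; case: eqP => [-> | _]; by rewrite ?sxV ?andbF.
Qed.

End GaloisGroup.

Section GaloisCorrespondence.
Variables (K : fieldType) (Om : splittingFieldType K).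
Hypothesis galOm : galois 1%VS {:Om}.
Implicit Types (E F L M : {subfield Om}) (s : gal_of {:Om}).

Lemma card_gal_mul_dim E : (#|'Gal({:Om} / E)%g| * \dim E)%N = \dim {:Om}.
Proof.
have galE : galois E {:Om} by apply: galoisS galOm; rewrite sub1v subvf.
by rewrite -galois_dim // divnK // field_dimS // subvf.
Qed.

Lemma gal_capv E F :
  'Gal({:Om} / (E :&: F)%AS)%g = ('Gal({:Om} / E) <*> 'Gal({:Om} / F))%g.
Proof.
apply/eqP; rewrite eqEsubset join_subG !galS ?capvSl ?capvSr //= andbT.
set J := ('Gal({:Om} / E) <*> 'Gal({:Om} / F))%G.
suff sJ : (fixedField J <= E :&: F)%VS by have := galS {:Om} sJ; rewrite gal_fixedField.
have fixedGal (X : {subfield Om}) : fixedField 'Gal({:Om} / X)%g = X.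
  by apply: galois_fixedField; apply: galoisS galOm; rewrite sub1v subvf.
rewrite subv_cap; apply/andP; split; [rewrite -(fixedGal E) | rewrite -(fixedGal F)].
  exact/fixedFieldS/joing_subl.
exact/fixedFieldS/joing_subr.
Qed.

Lemma dim_prodv_capv E F : normalField 1 F ->
  (\dim (E * F) * \dim (E :&: F) = \dim E * \dim F)%N.
Proof.
move=> nF.
have /normal_norm nGF : ('Gal({:Om} / F) <| 'Gal({:Om} / 1%AS))%g.
  by apply: normalField_normal; rewrite ?sub1v ?subvf.
have nEF : 'Gal({:Om} / E)%g \subset 'N('Gal({:Om} / F))%g.
  exact: subset_trans (galS _ (sub1v E)) nGF.
have := mul_cardG 'Gal({:Om} / E)%G 'Gal({:Om} / F)%G.
rewrite -(norm_joinEl nEF) -gal_capv -gal_prodv => cardEF.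
rewrite [RHS]mulnC in cardEF.
set c := (#|'Gal({:Om} / (E * F)%AS)%g| * #|'Gal({:Om} / (E :&: F)%AS)%g|)%N.
apply/eqP; rewrite -(@eqn_pmul2l c) ?muln_gt0 ?cardG_gt0 //.
by rewrite /c mulnACA !card_gal_mul_dim -cardEF mulnACA !card_gal_mul_dim.
Qed.

Lemma dim_prodv_disjoint E F : normalField 1 F -> (E :&: F)%VS = 1%VS ->
  \dim (E * F) = (\dim E * \dim F)%N.
Proof. by move=> nF capEF; rewrite -dim_prodv_capv // capEF dimv1 muln1. Qed.

Lemma capv_galClosure_prodv M F :
    normalField 1 F -> (galClosure M :&: F)%VS = 1%VS ->
  (galClosure M :&: (M * F) <= M)%VS.
Proof.
move=> nF capMF; set E := (galClosure M :&: (M * F))%AS.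
have sME : (M <= E)%VS by rewrite subv_cap sub_galClosure field_subvMr.
have EF : (E * F)%VS = (M * F)%VS.
  apply/eqP; rewrite eqEsubv (prodvSl _ sME) andbT.
  by apply: prodv_sub; rewrite ?capvSr ?field_subvMl.
have disjE : (E :&: F)%VS = 1%VS := capv_trivialS (capvSl _ _) capMF.
have disjM : (M :&: F)%VS = 1%VS := capv_trivialS (sub_galClosure M) capMF.
have /eqP : (\dim M * \dim F = \dim E * \dim F)%N by rewrite -!dim_prodv_disjoint // EF.
rewrite eqn_pmul2r ?adim_gt0 // => /eqP dimME.
by have /eqP <- : (M == E :> {vspace Om}) by rewrite eqEdim sME dimME leqnn.
Qed.

Lemma magnification_aimg_sub L M F s : (L <= M)%VS ->
    normalField 1 F -> (galClosure M :&: F)%VS = 1%VS ->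
  (s @: (L * F) <= M * F)%VS = (s @: L <= M)%VS.
Proof.
move=> sLM nF capMF; apply/idP/idP => [sLF | sL].
  apply: subv_trans (capv_galClosure_prodv nF capMF); rewrite subv_cap.
  rewrite (subv_trans (limgS _ sLM) (aimg_sub_galClosure M s)) /=.
  exact: subv_trans (limgS _ (field_subvMr L F)) sLF.
by rewrite aimgM prodvS ?normalField_aimg_sub.
Qed.

Lemma card_gal_prodv L F : normalField 1 F -> (L :&: F)%VS = 1%VS ->
  #|'Gal({:Om} / L)%g| = (#|'Gal({:Om} / (L * F)%AS)%g| * \dim F)%N.
Proof.
move=> nF capLF; apply/eqP; rewrite -(eqn_pmul2r (adim_gt0 L)) card_gal_mul_dim.
by rewrite -mulnA [(\dim F * _)%N]mulnC -dim_prodv_disjoint // card_gal_mul_dim.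
Qed.

End GaloisCorrespondence.

Theorem mainTheorem5 (K : fieldType) (Om : splittingFieldType K)
    (L M F : {subfield Om}) :
  perfect_field K ->
  (L <= M)%VS ->
  galois 1%VS F ->
  strong_cluster_magnification M F (M * F)%VS ->
  strong_cluster_magnification L F (L * F)%VS ->
  forall n : nat, root_capacity M L n ->
  root_capacity (M * F)%VS (L * F)%VS (\dim F * n).
Proof.
(* The magnification hypothesis on L follows from the one on M, as L <= M. *)
move=> perfK sLM /and3P[_ _ nF] [_ _ capMF _] _ n [alpha [DL rootsL]].
have galOm := perfect_galois Om perfK.
have sepLF : separable 1 (L * F)%AS by apply: separableSr (subvf _) _; case/and3P: galOm.
set gamma := separable_generator 1 (L * F)%AS.
have DLF : (L * F)%VS = <<1; gamma>>%VS := eq_adjoin_separable_generator sepLF (sub1v _).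
exists gamma; split => //.
have capLF : (L :&: F)%VS = 1%VS.
  exact: capv_trivialS (subv_trans sLM (sub_galClosure M)) capMF.
have conj_gamma : [set s : gal_of {:Om} | s gamma \in (M * F)%VS] =
                  [set s : gal_of {:Om} | s alpha \in M].
  apply/setP => s; rewrite !inE -!aimg_adjoin1_sub -DL -DLF.
  exact: magnification_aimg_sub.
have := card_gal_into M alpha; rewrite -conj_gamma card_gal_into.
have -> : <<1; alpha>>%AS = L by apply/val_inj.
have -> : <<1; gamma>>%AS = (L * F)%AS by apply/val_inj.
rewrite (card_gal_prodv galOm nF capLF) (nroots_in_uniq rootsL (nroots_in_conjugates _ _)).
rewrite -mulnA => /eqP; rewrite eqn_pmul2l ?cardG_gt0 // => /eqP <-.
exact: nroots_in_conjugates.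
Qed.
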